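(* Let $\mu>0$, $\sigma\ge 0$ and $r=\sigma/\mu$. Then the deterministic robust approximation ratio for selling a single item satisfies \[\mathrm{DAPX}(\mu,\sigma)=\inf_{p\ge 0}\ \sup_{F\in\mathbb{F}_{\mu,\sigma}}\frac{\mathrm{OPT}(F)}{\mathrm{REV}(p;F)}=\rho_D(r),\] where $\rho_D(r)$ is the unique positive solution $\rho$ of $\frac{(\rho-1)^3}{(2\rho-1)^2}=r^2$. Moreover, this value is achieved by the take-it-or-leave-it price $p=\frac{\rho_D(r)}{2\rho_D(r)-1}\cdot\mu$, i.e. $\sup_{F\in\mathbb{F}_{\mu,\sigma}}\mathrm{OPT}(F)/\mathrm{REV}(p;F)=\rho_D(r)$ for this $p$.
   Context: A nonnegative real random variable is $(\mu,\sigma)$-distributed if its expectation is $\mu$ and its standard deviation is at most $\sigma$; $\mathbb{F}_{\mu,\sigma}$ denotes the class of distributions of such random variables. There is one item and one buyer whose value $X$ is drawn from $F$. For a price $p\ge 0$, $\mathrm{REV}(p;F)=p\cdot\Pr[X\ge p]$ is the revenue of posting the take-it-or-leave-it price $p$, and $\mathrm{OPT}(F)=\sup_{p\ge0}\mathrm{REV}(p;F)$ is the optimal revenue over all truthful (possibly randomized) mechanisms. A ratio with zero denominator is interpreted as $+\infty$. *)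

From HB Require Import structures.
From mathcomp Require Import all_boot all_order all_algebra.
From mathcomp Require Import all_classical all_reals all_analysis.
Set Implicit Arguments. Unset Strict Implicit. Unset Printing Implicit Defensive.
Import Order.TTheory GRing.Theory Num.Theory.
Local Open Scope classical_set_scope.
Local Open Scope ring_scope.
Local Open Scope ereal_scope.

(* F is (mu,sigma)-distributed iff X >= 0 a.s., E[X] = mu and
   the standard deviation sqrt(Var X) is at most sigma (with sigma >= 0 this
   is Var X = E[(X-mu)^2] <= sigma^2). *)
Definition mu_sigma_class (R : realType) (mu sigma : R) : set (probability R R) :=
  [set F : probability R R |
     F [set x : R | (x < 0)%R] = 0 /\
     \int[F]_x (x%:E) = mu%:E /\
     \int[F]_x (((x - mu) ^+ 2)%:E) <= (sigma ^+ 2)%:E].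

Definition REV (R : realType) (p : R) (F : probability R R) : R :=
  (p * fine (F [set x : R | (p <= x)%R]))%R.

Definition OPT (R : realType) (F : probability R R) : \bar R :=
  ereal_sup [set (REV p F)%:E | p in [set p : R | (0 <= p)%R]].

Definition ratio (R : realType) (p : R) (F : probability R R) : \bar R :=
  if REV p F == 0%R then +oo else OPT F * ((REV p F)^-1)%:E.

Definition robust_ratio (R : realType) (mu sigma p : R) : \bar R :=
  ereal_sup [set ratio p F | F in mu_sigma_class mu sigma].

Definition DAPX (R : realType) (mu sigma : R) : \bar R :=
  ereal_inf [set robust_ratio mu sigma p | p in [set p : R | (0 <= p)%R]].

(* rho is a positive solution of (rho-1)^3/(2rho-1)^2 = r^2
   (the left-hand side being defined, i.e. 2rho-1 <> 0) *)
Definition rhoD_eq (R : realType) (r rho : R) : Prop :=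
  (0 < rho)%R /\ (2 * rho - 1 != 0)%R /\
  ((rho - 1) ^+ 3 / (2 * rho - 1) ^+ 2 = r ^+ 2)%R.

From Pilot Require Import Defs.
From HB Require Import structures.
From mathcomp Require Import all_boot all_order all_algebra.
From mathcomp Require Import all_classical all_reals all_analysis.
From mathcomp Require Import measurable_realfun ring lra.
Import Order.TTheory GRing.Theory Num.Theory.
Import numFieldTopology.Exports numFieldNormedType.Exports.
Local Open Scope classical_set_scope.
Local Open Scope ring_scope.

(* The function [(x - 1)^3 / (2x - 1)^2] increases from [0] to [+oo] on
   [[1, +oo)], so [rho] exists, is unique and is at least [1].  Let
   [p = rho mu / (2 rho - 1)] and [k = mu - p]; then [sigma^2 = (rho - 1) k^2].

   Upper bound at [p]: Cantelli's inequality gives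
   [Pr[X < p] <= sigma^2 / (sigma^2 + k^2) = 1 - 1/rho], so [REV p >= p / rho].
   A price [q <= rho p] earns at most [rho REV p], since [Pr[X >= q]] is
   nonincreasing in [q]; a price [q > rho p] earns at most [p] by the upper
   Cantelli bound.

   Lower bound at any price [q]: if [q = 0] or [q > mu], the point mass at [mu]
   makes the ratio infinite.  Otherwise, for [x0 < q], the two-point law of mean
   [mu] and variance [sigma^2] at [x0] and [b = mu + sigma^2 / (mu - x0)], which
   attains equality in Cantelli's bound at [x0], earns [q t] at price [q]
   ([t] being the weight of [b]), while the price [x0] or the price [b] earns at
   least [rho x0 t]; letting [x0] tend to [q] gives the ratio [rho]. *)

Section rhoD.
Context {R : realType}.
Implicit Types r x y : R.

Lemma rhoD_eqE r x :
  rhoD_eq r x <-> 1 <= x /\ (x - 1) ^+ 3 = r ^+ 2 * (2 * x - 1) ^+ 2.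
Proof.
split=> [[_ [D_neq0 e]]|[x_ge1 e]].
  have {}e : (x - 1) ^+ 3 = r ^+ 2 * (2 * x - 1) ^+ 2 by rewrite -e divfK // expf_neq0.
  split=> //; rewrite leNgt; apply/negP => x_lt1.
  have : (x - 1) ^+ 3 < 0.
    have -> : (x - 1) ^+ 3 = - (1 - x) ^+ 3 by ring.
    by rewrite oppr_lt0 exprn_gt0 // subr_gt0.
  by rewrite e ltNge mulr_ge0 ?sqr_ge0.
have D_neq0 : 2 * x - 1 != 0 by apply: lt0r_neq0; lra.
by split; [lra | split; [|rewrite e mulfK // expf_neq0]].
Qed.

Lemma rhoD_lhs_increasing x y : 1 <= x -> x < y ->
  (x - 1) ^+ 3 * (2 * y - 1) ^+ 2 < (y - 1) ^+ 3 * (2 * x - 1) ^+ 2.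
Proof.
move=> x_ge1 x_lt_y; rewrite -subr_gt0.
have a0 : 0 <= x - 1 by lra.
have b0 : 0 < y - 1 by lra.
have -> : (y - 1) ^+ 3 * (2 * x - 1) ^+ 2 - (x - 1) ^+ 3 * (2 * y - 1) ^+ 2 =
    (y - x) * (4 * ((x - 1) * (y - 1)) ^+ 2 + 4 * (x - 1) * (y - 1) * (x + y - 2)
               + (x - 1) ^+ 2 + (x - 1) * (y - 1) + (y - 1) ^+ 2) by ring.
apply: mulr_gt0; first lra.
have := mulr_ge0 a0 (ltW b0); have := exprn_gt0 2 b0.
nra.
Qed.

Lemma rhoD_exists r : exists2 x, 1 <= x & (x - 1) ^+ 3 = r ^+ 2 * (2 * x - 1) ^+ 2.
Proof.
pose f x := (x - 1) ^+ 3 - r ^+ 2 * (2 * x - 1) ^+ 2.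
have cf : continuous f.
  have -> : f = horner (('X - 1) ^+ 3 - (r ^+ 2)%:P * (2%:P * 'X - 1) ^+ 2).
    by apply/funext => x; rewrite /f !hornerE.
  exact: continuous_horner.
have r2 := sqr_ge0 r.
have f1 : f 1 <= 0 by rewrite /f; nra.
have fM : 0 <= f (2 + 9 * r ^+ 2).
  rewrite /f subr_ge0.
  have -> : 2 + 9 * r ^+ 2 - 1 = 1 + 9 * r ^+ 2 by ring.
  have -> : 2 * (2 + 9 * r ^+ 2) - 1 = 3 + 18 * r ^+ 2 by ring.
  nra.
have [c] : exists2 c, c \in `[1, 2 + 9 * r ^+ 2] & f c = 0.
  apply: IVT; first lra.
    exact: continuous_subspaceT.
  by rewrite ge_min f1 le_max fM orbT.
rewrite in_itv /= => /andP[c1 _] /eqP; rewrite subr_eq0 => /eqP fc.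
by exists c.
Qed.

Lemma rhoD_unique r x y : rhoD_eq r x -> rhoD_eq r y -> x = y.
Proof.
move=> /rhoD_eqE[x1 ex] /rhoD_eqE[y1 ey].
wlog xy : x y x1 y1 ex ey / x <= y.
  by move=> H; case: (leP x y) => [|/ltW] h; [exact: H | symmetry; exact: H].
apply/eqP; rewrite eq_le xy /= leNgt; apply/negP => /(rhoD_lhs_increasing _ _ x1).
by rewrite ex ey mulrAC ltxx.
Qed.

End rhoD.

Lemma measurable_lt_set (R : realType) (a : R) : measurable [set x : R | x < a].
Proof.
have -> : [set x : R | x < a] = [set` Interval -oo%O (BLeft a)].
  by apply/seteqP; split => x /=; rewrite in_itv.
exact: measurable_itv.
Qed.

Lemma measurable_ge_set (R : realType) (a : R) : measurable [set x : R | a <= x].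
Proof.
have -> : [set x : R | a <= x] = [set` Interval (BLeft a) +oo%O].
  by apply/seteqP; split => x /=; rewrite in_itv /= andbT.
exact: measurable_itv.
Qed.

#[local] Hint Extern 0 (measurable _) =>
  solve [exact: measurable_lt_set | exact: measurable_ge_set] : core.

Section real_probability.
Context {R : realType} {F : probability R R}.
Implicit Types a : R.

Lemma probability_fineE {A : set R} : measurable A -> F A = (fine (F A))%:E.
Proof. by move=> mA; rewrite fineK // fin_num_measure. Qed.

Lemma fine_probability_le1 (A : set R) : measurable A -> fine (F A) <= 1.
Proof. by move=> mA; rewrite -lee_fin -probability_fineE // probability_le1. Qed.

Lemma fine_probability_ge a :
  fine (F [set x | a <= x]) = 1 - fine (F [set x | x < a]).
Proof.
have -> : [set x : R | a <= x] = ~` [set x | x < a].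
  by apply/seteqP; split => x /=; rewrite leNgt => /negP.
by rewrite probability_setC // probability_fineE.
Qed.

Lemma fine_probability_ge_le a b : a <= b ->
  fine (F [set x | b <= x]) <= fine (F [set x | a <= x]).
Proof.
move=> ab; rewrite -lee_fin -!probability_fineE //.
by apply: le_measure; rewrite ?inE // => x /=; apply: le_trans.
Qed.

End real_probability.

Section cantelli.
Context {R : realType} {mu sigma : R} {F : probability R R}.
Hypothesis hF : mu_sigma_class mu sigma F.

Let measurable_sqr_shift (v : R) :
  measurable_fun setT (fun x : R => ((x - mu + v) ^+ 2)%:E).
Proof.
by apply/measurable_EFinP/measurable_funX/measurable_funD => //; exact: measurable_funB.
Qed.

Let integrable_sqr_dev : F.-integrable setT (fun x : R => ((x - mu) ^+ 2)%:E).
Proof.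
apply/integrableP; split.
  by apply/measurable_EFinP; apply: measurable_funX; apply: measurable_funB.
under eq_integral => x _ do rewrite gee0_abs ?lee_fin ?sqr_ge0 //.
by case: hF => _ [_ hv]; apply: le_lt_trans hv (ltry _).
Qed.

(* [|x| <= (x - mu)^2 + (1 + |mu|)] *)
Let integrable_id : F.-integrable setT (fun x : R => x%:E).
Proof.
have ic := finite_measure_integrable_cst F (1 + `|mu|) measurableT.
apply: (le_integrable measurableT _ _ (integrableD measurableT integrable_sqr_dev ic)).
  exact/measurable_EFinP.
move=> x _ /=; rewrite lee_fin [X in _ <= X]ger0_norm; last first.
  by rewrite addr_ge0 ?sqr_ge0 // addr_ge0.
have := ler_normD (x - mu) mu; rewrite subrK.
have : `|x - mu| ^+ 2 = (x - mu) ^+ 2 by rewrite real_normK ?num_real.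
have := sqr_ge0 (`|x - mu| - 1); have := normr_ge0 mu.
nra.
Qed.

Lemma integral_sqr_shift_le (v : R) :
  (\int[F]_x (((x - mu + v) ^+ 2)%:E) <= (sigma ^+ 2 + v ^+ 2)%:E)%E.
Proof.
have -> : (fun x : R => ((x - mu + v) ^+ 2)%:E) =
  (fun x => ((x - mu) ^+ 2)%:E + ((2 * v)%R%:E * x%:E + (EFin \o cst (v ^+ 2 - 2 * v * mu)%R) x))%E.
  by apply/funext => x /=; rewrite -EFinM -!EFinD; congr EFin; ring.
have ic := finite_measure_integrable_cst F (v ^+ 2 - 2 * v * mu) measurableT.
rewrite integralD //; last by apply: integrableD => //; apply: integrableZl.
rewrite integralD //; last exact: integrableZl.
rewrite integralZl //.
have -> : EFin \o cst (v ^+ 2 - 2 * v * mu) = cst (v ^+ 2 - 2 * v * mu)%:E by [].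
rewrite integral_cst //; have /= -> := probability_setT F; rewrite mule1.
case: hF => _ [-> hv]; rewrite -EFinM -EFinD.
have -> : 2 * v * mu + (v ^+ 2 - 2 * v * mu) = v ^+ 2 by ring.
by rewrite EFinD leeD.
Qed.

Lemma markov_sqr_shift (A : set R) (v w : R) : measurable A -> 0 < w ->
  (forall x, A x -> w ^+ 2 <= (x - mu + v) ^+ 2) ->
  (F A <= ((sigma ^+ 2 + v ^+ 2) / w ^+ 2)%:E)%E.
Proof.
move=> mA w0 hA; have w20 : 0 < w ^+ 2 by rewrite exprn_gt0.
rewrite -[A]setIT -integral_indic //.
apply: (@le_trans _ _ (\int[F]_x ((w ^+ 2)^-1%:E * ((x - mu + v) ^+ 2)%:E))%E).
  apply: ge0_le_integral => //.
  - by apply/measurable_EFinP; exact: measurable_indic.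
  - exact: emeasurable_funM.
  move=> x _; rewrite -EFinM lee_fin indicE.
  case: (boolP (x \in A)) => [/set_mem xA|_] /=.
    by rewrite ler_pdivlMl // mulr1; apply: hA.
  by rewrite mulr_ge0 ?sqr_ge0 // invr_ge0 ltW.
rewrite ge0_integralZl_EFin //; last 2 first.
- by move=> x _; rewrite lee_fin sqr_ge0.
- by rewrite invr_ge0 ltW.
by rewrite mulrC EFinM lee_pmul2l ?lte_fin ?invr_gt0 // integral_sqr_shift_le.
Qed.

(* The shift [v = sigma^2 / c] optimizes the bound of [markov_sqr_shift]. *)
Let cantelli_bound (c : R) : 0 < c ->
  (sigma ^+ 2 + (sigma ^+ 2 / c) ^+ 2) / (c + sigma ^+ 2 / c) ^+ 2 =
  sigma ^+ 2 / (sigma ^+ 2 + c ^+ 2).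
Proof.
move=> c0; have s0 := sqr_ge0 sigma.
have c2 : 0 < c ^+ 2 by rewrite exprn_gt0.
have cn : c != 0 by rewrite lt0r_neq0.
have scn : sigma ^+ 2 + c ^+ 2 != 0 by rewrite lt0r_neq0 // ltr_wpDl.
have -> : c + sigma ^+ 2 / c = (sigma ^+ 2 + c ^+ 2) / c by field.
by field; rewrite scn cn.
Qed.

Lemma cantelli_ge (q : R) : mu < q ->
  fine (F [set x | q <= x]) <= sigma ^+ 2 / (sigma ^+ 2 + (q - mu) ^+ 2).
Proof.
move=> mq; have c0 : 0 < q - mu by rewrite subr_gt0.
have u0 : 0 <= sigma ^+ 2 / (q - mu) by rewrite divr_ge0 ?sqr_ge0 ?ltW.
rewrite -lee_fin -probability_fineE // -cantelli_bound //.
apply: markov_sqr_shift => [||x /= qx]; [exact: measurable_ge_set | lra |].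
by rewrite ler_sqr ?nnegrE; lra.
Qed.

Lemma cantelli_lt (q : R) : q < mu ->
  fine (F [set x | x < q]) <= sigma ^+ 2 / (sigma ^+ 2 + (mu - q) ^+ 2).
Proof.
move=> qm; have c0 : 0 < mu - q by rewrite subr_gt0.
have u0 : 0 <= sigma ^+ 2 / (mu - q) by rewrite divr_ge0 ?sqr_ge0 ?ltW.
rewrite -lee_fin -probability_fineE // -cantelli_bound //.
rewrite -[(sigma ^+ 2 / (mu - q)) ^+ 2]sqrrN.
apply: markov_sqr_shift => [||x /= xq]; [exact: measurable_lt_set | lra |].
by rewrite -[X in _ <= X]sqrrN ler_sqr ?nnegrE; lra.
Qed.

End cantelli.

Lemma mu_sigma0_lt (R : realType) (mu : R) (F : probability R R) :
  mu_sigma_class mu 0 F -> F [set x | x < mu] = 0%E.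
Proof.
move=> [_ [_ hv]].
have mV : measurable_fun setT (fun x : R => ((x - mu) ^+ 2)%:E).
  by apply/measurable_EFinP; apply: measurable_funX; apply: measurable_funB.
have : (\int[F]_x `|((x - mu) ^+ 2)%:E| = 0)%E.
  under eq_integral => x _ do rewrite gee0_abs ?lee_fin ?sqr_ge0 //.
  apply/eqP; rewrite eq_le integral_ge0 ?andbT; last by move=> x _; rewrite lee_fin sqr_ge0.
  by rewrite expr0n in hv.
case/(ae_eq_integral_abs F measurableT mV) => N [mN N0 HN].
apply: (subset_measure0 _ _ _ N0) => //.
move=> x /= xmu; apply: HN => /(_ I) /eqP.
by rewrite eqe sqrf_eq0 subr_eq0 => /eqP xe; move: xmu; rewrite xe ltxx.
Qed.

Section clamp01.
Context {R : realType}.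
Implicit Types t : R.

Definition clamp01 t : R := Num.min (Num.max t 0) 1.

Lemma clamp01_id t : 0 <= t <= 1 -> clamp01 t = t.
Proof. by move=> /andP[t0 t1]; rewrite /clamp01 (max_idPl t0) (min_idPl t1). Qed.

Lemma clamp01_ge0 t : 0 <= clamp01 t.
Proof. by rewrite /clamp01 le_min ler01 le_max lexx orbT. Qed.

Lemma clamp01_le1 t : clamp01 t <= 1.
Proof. by rewrite /clamp01 ge_min lexx orbT. Qed.

End clamp01.

(* The weight is clamped so that [two_point a b t] is a probability for every [t]. *)
Section two_point.
Context {R : realType}.
Variables (a b t : R).

Let w_ge0 : 0 <= clamp01 t. Proof. exact: clamp01_ge0. Qed.
Let w1_ge0 : 0 <= 1 - clamp01 t. Proof. by rewrite subr_ge0 clamp01_le1. Qed.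

Definition two_point (A : set R) : \bar R :=
  ((clamp01 t)%:E * \d_b A + (1 - clamp01 t)%:E * \d_a A)%E.

Let two_point_add :
  two_point = measure_add (mscale (NngNum w_ge0) \d_b) (mscale (NngNum w1_ge0) \d_a).
Proof. by apply/funext => A; rewrite measure_addE. Qed.

Let two_point0 : two_point set0 = 0%E.
Proof. by rewrite /two_point !diracE !in_set0 !mule0 adde0. Qed.

Let two_point_ge0 A : (0 <= two_point A)%E.
Proof. by rewrite /two_point !diracE adde_ge0 // mule_ge0 // lee_fin. Qed.

Let two_point_sigma_additive : semi_sigma_additive two_point.
Proof. rewrite two_point_add; exact: measure_semi_sigma_additive. Qed.

HB.instance Definition _ := isMeasure.Build _ _ _ two_point
  two_point0 two_point_ge0 two_point_sigma_additive.

Let two_point_setT : two_point setT = 1%E.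
Proof. by rewrite /two_point !diracT !mule1 -EFinD subrKC. Qed.

HB.instance Definition _ := Measure_isProbability.Build _ _ _ two_point two_point_setT.

Lemma two_pointE A :
  two_point A = (clamp01 t * (b \in A)%:R + (1 - clamp01 t) * (a \in A)%:R)%:E.
Proof. by rewrite /two_point !diracE -!EFinM -EFinD. Qed.

Let ge0_integral_two_point (f : R -> \bar R) :
  measurable_fun setT f -> (forall x, 0 <= f x)%E ->
  (\int[two_point]_x f x = (clamp01 t)%:E * f b + (1 - clamp01 t)%:E * f a)%E.
Proof.
move=> mf f0; rewrite two_point_add ge0_integral_measure_add //.
by rewrite !ge0_integral_mscale // !integral_dirac // !diracT !mul1e.
Qed.

Lemma integral_two_point (g : R -> R) : measurable_fun setT g ->
  (\int[two_point]_x (g x)%:E = (clamp01 t * g b + (1 - clamp01 t) * g a)%:E)%E.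
Proof.
move=> mg; have mEg : measurable_fun setT (EFin \o g) by exact/measurable_EFinP.
rewrite integralE !ge0_integral_two_point //; last 2 first.
- exact: measurable_funeneg.
- exact: measurable_funepos.
rewrite funerpos funerneg /= -!EFinM -!EFinD; congr EFin.
have gE x : g x = g^\+ x - g^\- x by rewrite -{1}(funrposBneg g).
by rewrite (gE a) (gE b) opprD addrACA -!mulrBr.
Qed.

End two_point.

Section ratio.
Context {R : realType} {F : probability R R}.
Implicit Types p : R.

Lemma REV_le_OPT {p} : 0 <= p -> ((REV p F)%:E <= OPT F)%E.
Proof. by move=> p0; apply: ereal_sup_ubound; exists p. Qed.

Lemma ratio_REV0 p : REV p F = 0 -> Defs.ratio p F = +oo%E.
Proof. by rewrite /Defs.ratio => ->; rewrite eqxx. Qed.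

Lemma ratio_REV_neq0 p : REV p F != 0 -> Defs.ratio p F = (OPT F * (REV p F)^-1%:E)%E.
Proof. by rewrite /Defs.ratio => /negbTE ->. Qed.

End ratio.

Lemma two_point_mu_sigma (R : realType) (mu sigma a b t : R) :
  0 <= t <= 1 -> 0 <= a -> 0 <= b ->
  t * b + (1 - t) * a = mu ->
  t * (b - mu) ^+ 2 + (1 - t) * (a - mu) ^+ 2 <= sigma ^+ 2 ->
  mu_sigma_class mu sigma (two_point a b t).
Proof.
move=> t01 a0 b0 mean var; split; [|split].
- have notin x : 0 <= x -> (x \in [set y : R | y < 0]) = false.
    by move=> x0; apply/negbTE/negP => /set_mem /=; lra.
  by rewrite /= two_pointE clamp01_id // !notin // !mulr0 addr0.
- by rewrite (integral_two_point _ _ _ id) //= clamp01_id // mean.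
- rewrite (integral_two_point _ _ _ (fun x => (x - mu) ^+ 2)).
    by rewrite clamp01_id // lee_fin.
  by apply: measurable_funX; apply: measurable_funB.
Qed.

Lemma point_mass_mu_sigma (R : realType) (mu sigma : R) : 0 <= mu ->
  mu_sigma_class mu sigma (two_point mu mu 1).
Proof.
move=> mu_ge0; apply: two_point_mu_sigma => //; first by rewrite ler01 lexx.
  by rewrite subrr mul0r addr0 mul1r.
by rewrite !subrr expr0n /= !mulr0 addr0 sqr_ge0.
Qed.

Lemma REV_two_point (R : realType) (p a b t : R) : 0 <= t <= 1 ->
  REV p (two_point a b t) = p * (t * (p <= b)%R%:R + (1 - t) * (p <= a)%R%:R).
Proof.
move=> t01; rewrite /REV -[X in fine X]/(two_point a b t [set x | p <= x]).
have inE x : (x \in [set y : R | p <= y]) = (p <= x).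
  by apply/idP/idP => [/set_mem|/mem_set].
by rewrite two_pointE clamp01_id // !inE.
Qed.

Lemma ratio_le_robust_ratio {R : realType} {mu sigma : R} (q : R) {F : probability R R} :
  mu_sigma_class mu sigma F -> (Defs.ratio q F <= robust_ratio mu sigma q)%E.
Proof. by move=> hF; apply: ereal_sup_ubound; exists F. Qed.

Lemma robust_ratio_point_mass (R : realType) (mu sigma q : R) : 0 <= mu ->
  q = 0 \/ mu < q -> robust_ratio mu sigma q = +oo%E.
Proof.
move=> mu_ge0 q_out; apply/eqP; rewrite eq_le leey /=.
rewrite -(ratio_REV0 q (_ : REV q (two_point mu mu 1) = 0)).
  exact/ratio_le_robust_ratio/point_mass_mu_sigma.
rewrite REV_two_point ?ler01 ?lexx // subrr mul0r addr0 mul1r.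
by case: q_out => [->|/lt_geF ->]; rewrite ?mul0r ?mulr0.
Qed.

(* The two-point law attaining equality in Cantelli's bound at [x0]. *)
Section cantelli_two_point.
Context {R : realType} (sigma : R) {mu x0 : R}.
Hypotheses (x0_ge0 : 0 <= x0) (x0_lt_mu : x0 < mu).
Local Notation c := (mu - x0).
Local Notation b := (mu + sigma ^+ 2 / c).
Local Notation t := (c ^+ 2 / (sigma ^+ 2 + c ^+ 2)).

Let c_gt0 : 0 < c. Proof. by rewrite subr_gt0. Qed.
Let sc_gt0 : 0 < sigma ^+ 2 + c ^+ 2.
Proof. by rewrite ltr_wpDl ?sqr_ge0 ?exprn_gt0. Qed.
Let t_gt0 : 0 < t. Proof. by rewrite divr_gt0 ?exprn_gt0. Qed.
Let t01 : 0 <= t <= 1.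
Proof. by rewrite ltW //= ler_pdivrMr // mul1r lerDr sqr_ge0. Qed.
Let mu_le_b : mu <= b. Proof. by rewrite lerDl divr_ge0 ?sqr_ge0 ?ltW. Qed.

Let c_neq0 : c != 0. Proof. exact: lt0r_neq0. Qed.
Let sc_neq0 : sigma ^+ 2 + c ^+ 2 != 0. Proof. exact: lt0r_neq0. Qed.

Let mean_eq : t * b + (1 - t) * x0 = mu.
Proof. by field; rewrite sc_neq0 c_neq0. Qed.

Let var_eq : t * (b - mu) ^+ 2 + (1 - t) * (x0 - mu) ^+ 2 = sigma ^+ 2.
Proof. by field; rewrite sc_neq0 c_neq0. Qed.

Lemma cantelli_two_point_mu_sigma : mu_sigma_class mu sigma (two_point x0 b t).
Proof.
apply: two_point_mu_sigma; rewrite ?var_eq //.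
exact: le_trans (ltW (le_lt_trans x0_ge0 x0_lt_mu)) mu_le_b.
Qed.

Lemma REV_cantelli_two_point q : x0 < q <= mu ->
  REV q (two_point x0 b t) = q * t.
Proof.
case/andP=> x0q qmu; rewrite REV_two_point // (le_trans qmu mu_le_b) leNgt x0q.
by rewrite mulr1 mulr0 addr0.
Qed.

Lemma OPT_cantelli_two_point_ge :
  ((Num.max x0 (b * t))%:E <= OPT (two_point x0 b t))%E.
Proof.
have b_gt_x0 : x0 < b by apply: lt_le_trans mu_le_b.
rewrite EFin_max ge_max; apply/andP; split.
  apply: le_trans (REV_le_OPT x0_ge0).
  by rewrite REV_two_point // (ltW b_gt_x0) lexx !mulr1 subrKC mulr1.
apply: le_trans (REV_le_OPT (le_trans x0_ge0 (ltW b_gt_x0))).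
by rewrite REV_two_point // lee_fin lexx (leNgt b x0) b_gt_x0 mulr1 mulr0 addr0 mulrC.
Qed.

End cantelli_two_point.

Section rhoD_bounds.
Context {R : realType} {mu sigma rho : R}.
Hypotheses (mu_gt0 : 0 < mu) (rho_ge1 : 1 <= rho)
  (rho_eq : (rho - 1) ^+ 3 = (sigma / mu) ^+ 2 * (2 * rho - 1) ^+ 2).

Local Notation p := (rho / (2 * rho - 1) * mu).

Let rho_gt0 : 0 < rho. Proof. exact: lt_le_trans ltr01 rho_ge1. Qed.
Let D_gt0 : 0 < 2 * rho - 1. Proof. by have := rho_ge1; lra. Qed.
Let D_neq0 : 2 * rho - 1 != 0. Proof. exact: lt0r_neq0. Qed.
Let mu_neq0 : mu != 0. Proof. exact: lt0r_neq0. Qed.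

Lemma rho_price_gt0 : 0 < p.
Proof. by rewrite mulr_gt0 // divr_gt0 //; have := rho_ge1; lra. Qed.

Let p_gt0 := rho_price_gt0.

Let price_gap : (mu - p) * rho = p * (rho - 1).
Proof. by field. Qed.

Let rho_price_gap : rho * p - mu = (rho - 1) * (mu - p).
Proof. by field. Qed.

Let gap_ge0 : 0 <= mu - p.
Proof.
by rewrite -(pmulr_lge0 _ rho_gt0) price_gap (mulr_ge0 (ltW p_gt0)) ?subr_ge0.
Qed.

Let gap_le_price : mu - p <= p.
Proof. by rewrite -(ler_pM2r rho_gt0) price_gap ler_pM2l //; lra. Qed.

Let sigma_gap : sigma ^+ 2 = (rho - 1) * (mu - p) ^+ 2.
Proof.
have e2 : (sigma / mu) ^+ 2 = (rho - 1) ^+ 3 / (2 * rho - 1) ^+ 2.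
  by rewrite rho_eq mulfK // expf_neq0.
by rewrite -[sigma](divfK mu_neq0) exprMn e2; field; rewrite ?D_neq0 ?mu_neq0.
Qed.

Lemma rho_price_tail {F : probability R R} : mu_sigma_class mu sigma F ->
  1 <= rho * fine (F [set x | p <= x]).
Proof.
move=> hF; rewrite fine_probability_ge.
have [sigma0|sigma_neq0] := eqVneq sigma 0.
  have rho1 : rho = 1.
    by move/eqP: rho_eq; rewrite sigma0 mul0r expr0n mul0r expf_eq0 subr_eq0 => /eqP.
  have -> : p = mu by rewrite rho1; field.
  by move: hF; rewrite sigma0 rho1 => /mu_sigma0_lt ->; rewrite subr0 mul1r.
have gap_gt0 : 0 < mu - p.
  rewrite lt_neqAle gap_ge0 andbT eq_sym; apply: contra sigma_neq0 => /eqP gap0.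
  by rewrite -sqrf_eq0 sigma_gap gap0 expr0n mulr0.
have gap2_gt0 : 0 < (mu - p) ^+ 2 by rewrite exprn_gt0.
have p_lt_mu : p < mu by rewrite -subr_gt0.
have := cantelli_lt hF _ p_lt_mu.
have -> : sigma ^+ 2 + (mu - p) ^+ 2 = rho * (mu - p) ^+ 2 by rewrite sigma_gap; ring.
rewrite sigma_gap ler_pdivlMr ?mulr_gt0 // mulrA ler_pM2r // => tail.
by have := rho_ge1; lra.
Qed.

Lemma REV_gt_rho_price {F : probability R R} {q : R} :
  mu_sigma_class mu sigma F -> rho * p < q -> REV q F <= p.
Proof.
move=> hF rhop_lt_q; have r1 := rho_ge1; have p0 := p_gt0; have k0 := gap_ge0.
have mu_lt_q : mu < q.
  by apply: le_lt_trans rhop_lt_q; rewrite -subr_ge0 rho_price_gap mulr_ge0 // subr_ge0.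
have q_gt0 : 0 < q by apply: le_lt_trans mu_lt_q; exact: ltW.
have key : p * (sigma ^+ 2 + (q - mu) ^+ 2) - q * sigma ^+ 2 =
    p * (q - rho * p) ^+ 2 + (q - rho * p) * (rho - 1) * (mu - p) * (2 * p - (mu - p)).
  have -> : q - mu = (q - rho * p) + (rho - 1) * (mu - p) by rewrite -rho_price_gap; ring.
  by rewrite sigma_gap; ring.
have sc_gt0 : 0 < sigma ^+ 2 + (q - mu) ^+ 2.
  by rewrite ltr_wpDl ?sqr_ge0 // exprn_gt0 // subr_gt0.
apply: le_trans (ler_wpM2l (ltW q_gt0) (cantelli_ge hF _ mu_lt_q)) _.
rewrite mulrA ler_pdivrMr // -subr_ge0 key.
have h1 : 0 <= q - rho * p by rewrite subr_ge0 ltW.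
have h2 : 0 <= 2 * p - (mu - p) by have := gap_le_price; lra.
apply: addr_ge0; first by rewrite mulr_ge0 ?sqr_ge0 ?ltW.
by apply: mulr_ge0 (mulr_ge0 (mulr_ge0 h1 _) k0) h2; rewrite subr_ge0.
Qed.

Lemma REV_le_rho_price {F : probability R R} {q : R} :
  mu_sigma_class mu sigma F -> 0 <= q -> REV q F <= rho * REV p F.
Proof.
move=> hF q0; have tail := rho_price_tail hF.
have p_le : p <= rho * REV p F.
  by rewrite /REV mulrCA ler_peMr // ltW.
have tq0 : 0 <= fine (F [set x | q <= x]) := fine_ge0 (measure_ge0 _ _).
have tq1 : fine (F [set x | q <= x]) <= 1 by exact: fine_probability_le1.
have [qp|pq] := lerP q p.
  by apply: le_trans p_le; rewrite /REV (le_trans _ qp) // ler_piMr.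
have [qrp|rpq] := lerP q (rho * p); last exact: le_trans (REV_gt_rho_price hF rpq) p_le.
rewrite /REV [rho * _]mulrA; apply: ler_pM => //.
exact: fine_probability_ge_le (ltW pq).
Qed.

Lemma robust_ratio_rho_price_le : (robust_ratio mu sigma p <= rho%:E)%E.
Proof.
apply: ge_ereal_sup => _ [F hF <-].
have REVp_gt0 : 0 < REV p F.
  by rewrite mulr_gt0 // -(pmulr_rgt0 _ rho_gt0); have := rho_price_tail hF; lra.
have OPT_le : (OPT F <= (rho * REV p F)%:E)%E.
  by apply: ge_ereal_sup => _ [q q0 <-]; rewrite lee_fin REV_le_rho_price.
rewrite ratio_REV_neq0 ?lt0r_neq0 //.
apply: le_trans (lee_wpmul2r _ OPT_le) _; first by rewrite lee_fin invr_ge0 ltW.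
by rewrite -EFinM mulfK ?lt0r_neq0.
Qed.

Lemma two_point_dichotomy c : 0 < c ->
  rho * c ^+ 2 <= sigma ^+ 2 + c ^+ 2 \/ rho * (mu - c) <= mu + sigma ^+ 2 / c.
Proof.
move=> c0; have r1 := rho_ge1; have k0 := gap_ge0.
have [ck|kc] := lerP c (mu - p); [left|right].
  have := ler_pM (ltW c0) (ltW c0) ck ck.
  rewrite sigma_gap; nra.
rewrite -(ler_pM2r c0) mulrDl divfK ?lt0r_neq0 // -subr_ge0.
have -> : mu * c + sigma ^+ 2 - rho * (mu - c) * c =
    (c - (mu - p)) * (rho * c - (rho - 1) * (mu - p)).
  by rewrite sigma_gap; field.
by apply: mulr_ge0; nra.
Qed.

Lemma cantelli_two_point_ratio_ge {q x0} : 0 <= x0 -> x0 < q -> q <= mu ->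
  ((rho * x0 / q)%:E <= Defs.ratio q
     (two_point x0 (mu + sigma ^+ 2 / (mu - x0))
        ((mu - x0) ^+ 2 / (sigma ^+ 2 + (mu - x0) ^+ 2))))%E.
Proof.
move=> x0_ge0 x0_lt_q q_le_mu; have x0_lt_mu := lt_le_trans x0_lt_q q_le_mu.
have q_gt0 : 0 < q := le_lt_trans x0_ge0 x0_lt_q.
have REV_G := REV_cantelli_two_point sigma x0_lt_mu q.
have OPT_G := OPT_cantelli_two_point_ge sigma x0_ge0 x0_lt_mu.
have c_gt0 : 0 < mu - x0 by rewrite subr_gt0.
have sc_gt0 : 0 < sigma ^+ 2 + (mu - x0) ^+ 2 by rewrite ltr_wpDl ?sqr_ge0 ?exprn_gt0.
have dichotomy := two_point_dichotomy _ c_gt0.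
rewrite (_ : mu - (mu - x0) = x0) in dichotomy; last by ring.
set t := (mu - x0) ^+ 2 / _ in REV_G OPT_G dichotomy *.
set b := mu + _ in REV_G OPT_G dichotomy *.
have t_gt0 : 0 < t by rewrite divr_gt0 ?exprn_gt0.
have qt_gt0 : 0 < q * t by rewrite mulr_gt0.
rewrite ratio_REV_neq0 REV_G ?x0_lt_q ?q_le_mu ?lt0r_neq0 //.
apply: (le_trans _ (lee_wpmul2r _ OPT_G)); last by rewrite lee_fin invr_ge0 ltW.
have -> : rho * x0 / q = rho * x0 * t / (q * t) by field; rewrite !lt0r_neq0.
rewrite -EFinM lee_fin ler_pM2r ?invr_gt0 // le_max.
case: dichotomy => h; apply/orP; [left|right]; last by rewrite ler_pM2r.
have : rho * t <= 1 by rewrite /t mulrA ler_pdivrMr ?mul1r.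
nra.
Qed.

Lemma robust_ratio_ge q : 0 <= q -> (rho%:E <= robust_ratio mu sigma q)%E.
Proof.
move=> q_ge0; have mu_ge0 := ltW mu_gt0.
have [->|q_neq0] := eqVneq q 0; first by rewrite robust_ratio_point_mass ?leey //; left.
have [q_le_mu|mu_lt_q] := leP q mu; last by rewrite robust_ratio_point_mass ?leey //; right.
have q_gt0 : 0 < q by rewrite lt_neqAle eq_sym q_neq0.
apply/lee_mul01Pr; first by rewrite lee_fin ltW.
move=> s /andP[s_gt0 s_lt1]; set x0 := (1 + s) / 2 * q.
have x0_ge0 : 0 <= x0 by rewrite mulr_ge0 //; lra.
have x0_lt_q : x0 < q by rewrite /x0 gtr_pMl //; lra.
have x0_lt_mu := lt_le_trans x0_lt_q q_le_mu.
apply: (le_trans _ (ratio_le_robust_ratio q (cantelli_two_point_mu_sigma sigma x0_ge0 x0_lt_mu))).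
apply: (le_trans _ (cantelli_two_point_ratio_ge x0_ge0 x0_lt_q q_le_mu)).
rewrite -EFinM lee_fin ler_pdivlMr // [_ * rho]mulrC -mulrA ler_pM2l // /x0.
by rewrite ler_pM2r //; lra.
Qed.

End rhoD_bounds.

Theorem theorem1 (R : realType) (mu sigma : R) :
  0 < mu -> 0 <= sigma ->
  exists rho : R,
    [/\ rhoD_eq (sigma / mu) rho,
        (forall rho' : R, rhoD_eq (sigma / mu) rho' -> rho' = rho),
        DAPX mu sigma = rho%:E &
        robust_ratio mu sigma (rho / (2 * rho - 1) * mu) = rho%:E].
Proof.
(* Only [sigma ^+ 2] matters. *)
move=> mu_gt0 _.
have [rho rho_ge1 rho_eq] := rhoD_exists (sigma / mu).
have upper := robust_ratio_rho_price_le mu_gt0 rho_ge1 rho_eq.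
have lower := robust_ratio_ge mu_gt0 rho_ge1 rho_eq.
have price_ge0 := ltW (rho_price_gt0 mu_gt0 rho_ge1).
have rhoE : rhoD_eq (sigma / mu) rho by exact/rhoD_eqE.
exists rho; split=> //.
- by move=> rho' /rhoD_unique; apply.
- apply/le_anti/andP; split.
    by apply: le_trans upper; apply: ereal_inf_lbound; exists (rho / (2 * rho - 1) * mu).
  by apply: le_ereal_inf_tmp => _ [q q0 <-]; exact: lower.
- by apply/le_anti; rewrite upper lower.
Qed.
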